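(* Let $X$ be a finite set. (1) Let $L$ be a finite set and $\Phi : X \rightrightarrows L$ a labeling correspondence. Then the classifier $f:2^X\to 2^X$ associated with $\Phi$ is a closure operator on $X$. (2) Let $f:2^X\to 2^X$ be a closure operator on $X$. Then there exist a finite set of labels $L$ and a labeling correspondence $\Phi: X\rightrightarrows L$ such that the classifier associated with $\Phi$ is $f$. Moreover, one such choice is $L=S(f)$ and $\Phi(x)=\{s \mid s\in S(f),\ x\in s\}$ for $x\in X$.
   Context: A closure operator on $X$ is a map $f:2^X\to 2^X$ such that (extensivity) $A\subseteq f(A)$ for all $A$ and $f(\emptyset)=\emptyset$; (idempotence) $f(f(A))=f(A)$; (monotonicity) $A\subseteq B$ implies $f(A)\subseteq f(B)$. A set $A$ is closed for $f$ if $f(A)=A$, and $S(f)=f(2^X)$ denotes the set of closed sets. A labeling correspondence is a set-valued map $\Phi: X\rightrightarrows L$ assigning to each $x\in X$ a subset $\Phi(x)\subseteq L$. The classifier associated with $\Phi$ is the map $f:2^X\to 2^X$ given by $f(A)=\{x\in X \mid \bigcap_{y\in A}\Phi(y)\subseteq \Phi(x)\}$. *)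

From mathcomp Require Import all_boot.
Set Implicit Arguments. Unset Strict Implicit. Unset Printing Implicit Defensive.

Section Defs.
Variable X : finType.

Definition closure_operator (f : {set X} -> {set X}) : Prop :=
  [/\ (forall A : {set X}, A \subset f A), f set0 = set0,
      (forall A : {set X}, f (f A) = f A) &
      (forall A B : {set X}, A \subset B -> f A \subset f B)].

Definition closed_sets (f : {set X} -> {set X}) : {set {set X}} :=
  [set f A | A in [set: {set X}]].

Definition classifier (L : finType) (Phi : X -> {set L}) (A : {set X}) : {set X} :=
  if A == set0 then set0
  else [set x | \bigcap_(y in A) Phi y \subset Phi x].

Definition closed_label (f : {set X} -> {set X}) : finType :=
  {s : {set X} | s \in closed_sets f}.

Definition canonical_labeling (f : {set X} -> {set X}) (x : X)
  : {set closed_label f} :=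
  [set s : closed_label f | x \in val s].

End Defs.

From mathcomp Require Import all_boot.

Set Implicit Arguments. Unset Strict Implicit. Unset Printing Implicit Defensive.

(* The classifier maps a nonempty A to the points carrying every label common
   to A; the points of A carry these labels, so A and its image have the same
   common labels, which yields idempotence. Conversely, if the labels are the
   closed sets of f, the labels common to A are the closed supersets of A, and
   f A is exactly the intersection of these because it is the least of them. *)

Section Classifier.
Variables (X L : finType) (Phi : X -> {set L}).
Implicit Types A B : {set X}.

Lemma classifier0 : classifier Phi set0 = set0.
Proof. by rewrite /classifier eqxx. Qed.

Lemma classifierE A : A != set0 ->
  classifier Phi A = [set x | \bigcap_(y in A) Phi y \subset Phi x].
Proof. by rewrite /classifier => /negbTE ->. Qed.

Lemma sub_classifier A : A \subset classifier Phi A.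
Proof.
have [->|A0] := eqVneq A set0; first exact: sub0set.
by rewrite classifierE //; apply/subsetP => x xA; rewrite inE bigcap_inf.
Qed.

Lemma bigcap_classifier A : A != set0 ->
  \bigcap_(y in classifier Phi A) Phi y = \bigcap_(y in A) Phi y.
Proof.
move=> A0; apply/eqP; rewrite eqEsubset; apply/andP; split.
- by apply/bigcapsP => y yA; rewrite bigcap_inf // (subsetP (sub_classifier A)).
- by apply/bigcapsP => y; rewrite classifierE // inE.
Qed.

Lemma classifierS A B : A \subset B -> classifier Phi A \subset classifier Phi B.
Proof.
move=> AB; have [->|A0] := eqVneq A set0; first by rewrite classifier0 sub0set.
rewrite !classifierE ?(subset_neq0 AB) //; apply/subsetP => x; rewrite !inE.
by apply: subset_trans; apply/bigcapsP => y yA; rewrite bigcap_inf ?(subsetP AB).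
Qed.

Lemma classifier_id A : classifier Phi (classifier Phi A) = classifier Phi A.
Proof.
have [->|A0] := eqVneq A set0; first by rewrite !classifier0.
have fA0 : classifier Phi A != set0 := subset_neq0 (sub_classifier A) A0.
by rewrite [LHS]classifierE // bigcap_classifier // -classifierE.
Qed.

Lemma classifier_closure : closure_operator (classifier Phi).
Proof.
by split; [exact: sub_classifier | exact: classifier0
          | exact: classifier_id | exact: classifierS].
Qed.

End Classifier.

Section CanonicalLabeling.
Variables (X : finType) (f : {set X} -> {set X}).
Hypothesis f_closure : closure_operator f.
Implicit Types A s : {set X}.

Lemma closed_setsP s : reflect (f s = s) (s \in closed_sets f).
Proof.
case: f_closure => _ _ f_id _; apply: (iffP imsetP) => [[B _ ->] | fs].
- exact: f_id.
- by exists s; rewrite ?inE.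
Qed.

Lemma mem_closureP A x :
  reflect (forall s, s \in closed_sets f -> A \subset s -> x \in s) (x \in f A).
Proof.
case: f_closure => sub_f _ f_id fS; apply: (iffP idP) => [xfA s /closed_setsP fs As | ].
- by rewrite -fs (subsetP (fS _ _ As)).
- by apply; [apply/closed_setsP; exact: f_id | exact: sub_f].
Qed.

Lemma bigcap_canonical_labeling A :
  \bigcap_(y in A) canonical_labeling f y = [set s : closed_label f | A \subset val s].
Proof.
apply/setP => s; rewrite inE; apply/bigcapP/subsetP => [sA y yA | As y yA].
- by have := sA y yA; rewrite inE.
- by rewrite inE As.
Qed.

Lemma classifier_canonical_labeling A : classifier (canonical_labeling f) A = f A.
Proof.
have [->|A0] := eqVneq A set0; first by case: f_closure => _ -> _ _; rewrite classifier0.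
rewrite classifierE //; apply/setP => x; rewrite inE bigcap_canonical_labeling.
apply/subsetP/mem_closureP => [xs s sc As | xs s].
- by have := xs (Sub s sc : closed_label f); rewrite !inE; apply.
- by rewrite !inE => As; apply: xs => //; exact: valP.
Qed.

End CanonicalLabeling.

Theorem proposition1 (X : finType) :
  (forall (L : finType) (Phi : X -> {set L}), closure_operator (classifier Phi))
  /\
  (forall f : {set X} -> {set X}, closure_operator f ->
     (exists (L : finType) (Phi : X -> {set L}),
        forall A : {set X}, classifier Phi A = f A)
     /\ (forall A : {set X}, classifier (canonical_labeling f) A = f A)).
Proof.
split=> [L Phi | f f_closure]; first exact: classifier_closure.
split; last exact: classifier_canonical_labeling.
by exists (closed_label f), (canonical_labeling f);
  exact: classifier_canonical_labeling.
Qed.
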